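(* Let $h_1,\dots,h_{m_1},g_1,\dots,g_{m_2}\in\mathbb{R}[X]$ with every $\deg g_j$ even, and let $U=\{x\in\mathbb{R}^n:h_i(x)=0\ (i=1,\dots,m_1),\ g_j(x)\ge0\ (j=1,\dots,m_2)\}$. Define $\tilde U^{o}=\{\tilde x=(x_0,x)\in\mathbb{R}^{n+1}:\tilde h_i(\tilde x)=0,\ \tilde g_j(\tilde x)\ge0,\ x_0>0\}$ and $\tilde U^{c}$ the same set with $x_0\ge0$ in place of $x_0>0$. Suppose $U$ is not compact. If $\mathrm{conv}(\overline{\tilde U^{o}})$ is closed and pointed, then $U$ is not closed at $\infty$, i.e. $\overline{\tilde U^{o}}\neq\tilde U^{c}$.
   Context: $X=(X_1,\dots,X_n)$, $\tilde X=(X_0,X)$. For $f\in\mathbb{R}[X]$ of degree $d$, its homogenization is $\tilde f(\tilde X)=X_0^df(X/X_0)$. A closed convex cone $K$ is pointed if $K\cap(-K)=\{0\}$. $U$ is closed at $\infty$ if $\overline{\tilde U^{o}}=\tilde U^{c}$. Overline denotes closure, $\mathrm{conv}$ convex hull. *)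

From Stdlib Require Import Reals Lra List Arith.
Import ListNotations.
Open Scope R_scope.

(* Points of R^n are functions nat -> R; only coordinates i < n matter.
   All topological notions below only look at coordinates i < n. *)
Definition vec := nat -> R.

Definition sumR (n : nat) (f : nat -> R) : R :=
  fold_right Rplus 0 (map f (seq 0 n)).

Definition sumN (n : nat) (f : nat -> nat) : nat :=
  fold_right Nat.add 0%nat (map f (seq 0 n)).

Definition prodR (n : nat) (f : nat -> R) : R :=
  fold_right Rmult 1 (map f (seq 0 n)).

(* exponent vectors are lists of naturals of length n; coefficients are given
   by a function, with a duplicate-free finite list containing the support. *)
Record mpoly (n : nat) := MPoly {
  mcoef : list nat -> R;
  msupp : list (list nat);
  msupp_nodup : NoDup msupp;
  msupp_len : forall a, In a msupp -> length a = n;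
  msupp_cover : forall a, mcoef a <> 0 -> In a msupp
}.
Arguments mcoef {n}.
Arguments msupp {n}.

Definition expo (n : nat) (a : list nat) (i : nat) : nat := nth i a 0%nat.

Definition mdeg_mono (n : nat) (a : list nat) : nat := sumN n (expo n a).

Definition mono_eval (n : nat) (a : list nat) (x : vec) : R :=
  prodR n (fun i => x i ^ expo n a i).

Definition peval {n} (f : mpoly n) (x : vec) : R :=
  fold_right Rplus 0 (map (fun a => mcoef f a * mono_eval n a x) (msupp f)).

(* total degree (degree of the zero polynomial is 0 by convention) *)
Definition pdeg {n} (f : mpoly n) : nat :=
  fold_right Nat.max 0%nat
    (map (fun a => if Req_EM_T (mcoef f a) 0 then 0%nat else mdeg_mono n a)
         (msupp f)).

(* homogenization evaluated at xt = (x0, x) in R^{n+1}, where xt 0 = x0 and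
   xt (S i) = x_{i+1}:  ~f(xt) = x0^d f(x/x0) = sum_a c_a x0^(d-|a|) x^a *)
Definition hom_eval {n} (f : mpoly n) (xt : vec) : R :=
  fold_right Rplus 0
    (map (fun a => mcoef f a * xt 0%nat ^ (pdeg f - mdeg_mono n a)
                   * mono_eval n a (fun i => xt (S i)))
         (msupp f)).

Definition dist (n : nat) (x y : vec) : R :=
  sqrt (sumR n (fun i => (x i - y i) ^ 2)).

Definition closure (n : nat) (S : vec -> Prop) : vec -> Prop :=
  fun x => forall eps, 0 < eps -> exists y, S y /\ dist n x y < eps.

Definition is_closed (n : nat) (S : vec -> Prop) : Prop :=
  forall x, closure n S x -> S x.

Definition is_open (n : nat) (O : vec -> Prop) : Prop :=
  forall x, O x -> exists eps, 0 < eps /\ forall y, dist n x y < eps -> O y.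

Definition is_compact (n : nat) (S : vec -> Prop) : Prop :=
  forall (I : Type) (O : I -> vec -> Prop),
    (forall i, is_open n (O i)) ->
    (forall x, S x -> exists i, O i x) ->
    exists l : list I, forall x, S x -> exists i, In i l /\ O i x.

Definition conv (n : nat) (S : vec -> Prop) : vec -> Prop :=
  fun x => exists l : list (R * vec),
    Forall (fun p => 0 <= fst p /\ S (snd p)) l /\
    fold_right Rplus 0 (map fst l) = 1 /\
    forall i, (i < n)%nat ->
      x i = fold_right Rplus 0 (map (fun p => fst p * snd p i) l).

Definition pointed (n : nat) (K : vec -> Prop) : Prop :=
  forall x, K x -> K (fun i => - x i) -> forall i, (i < n)%nat -> x i = 0.

Definition Uset (n m1 m2 : nat) (h g : nat -> mpoly n) : vec -> Prop :=
  fun x => (forall i, (i < m1)%nat -> peval (h i) x = 0) /\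
           (forall j, (j < m2)%nat -> 0 <= peval (g j) x).

Definition Uo (n m1 m2 : nat) (h g : nat -> mpoly n) : vec -> Prop :=
  fun xt => (forall i, (i < m1)%nat -> hom_eval (h i) xt = 0) /\
            (forall j, (j < m2)%nat -> 0 <= hom_eval (g j) xt) /\
            0 < xt 0%nat.

Definition Uc (n m1 m2 : nat) (h g : nat -> mpoly n) : vec -> Prop :=
  fun xt => (forall i, (i < m1)%nat -> hom_eval (h i) xt = 0) /\
            (forall j, (j < m2)%nat -> 0 <= hom_eval (g j) xt) /\
            0 <= xt 0%nat.

Definition closed_at_inf (n m1 m2 : nat) (h g : nat -> mpoly n) : Prop :=
  forall xt, closure (S n) (Uo n m1 m2 h g) xt <-> Uc n m1 m2 h g xt.

(* We prove the contrapositive.  Assume [closure ~U^o = ~U^c].  On the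
   hyperplane at infinity [x0 = 0] the homogenized constraints have the parity
   of their degrees, so evenness of the [deg g_j] makes [~U^c] symmetric there:
   a point [xt] of the closure with [x0 = 0] has [-xt] in the closure too, and
   pointedness forces [xt = 0].  Now map [U] into [R^(n+1)] by
   [lift x = (1, x) / (1 + |x|_1)]; the image lies in [~U^o] on the unit
   l1-sphere, so its closure is bounded, contained in [~U^c] and misses the
   origin, hence lies in [x0 > 0].  Dehomogenization [dehom] is continuous
   there and inverts [lift], so it pulls an open cover of [U] back to an open
   cover of this closure, and a Heine-Borel argument (proved below by
   bisection) yields a finite subcover: [U] is compact. *)

From Pilot Require Import Defs.
From Stdlib Require Import Reals Lra List Arith.
From Stdlib Require Import Lia ClassicalEpsilon Classical FunctionalExtensionality.
Open Scope R_scope.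

Definition lsum (l : list nat) (f : nat -> R) : R := fold_right Rplus 0 (map f l).

Lemma sumR_lsum n f : sumR n f = lsum (seq 0 n) f.
Proof. reflexivity. Qed.

Lemma sumR_S n f : sumR (S n) f = f 0%nat + sumR n (fun j => f (S j)).
Proof. unfold sumR. simpl. rewrite <- seq_shift, map_map. reflexivity. Qed.

Lemma in_seq0 n i : In i (seq 0 n) <-> (i < n)%nat.
Proof. rewrite in_seq. lia. Qed.

Lemma lsum_scal l f c : lsum l (fun i => c * f i) = c * lsum l f.
Proof. induction l as [|a l IH]; unfold lsum in *; simpl; [ring | rewrite IH; ring]. Qed.

Lemma lsum_nonneg l f : (forall i, In i l -> 0 <= f i) -> 0 <= lsum l f.
Proof.
  unfold lsum; induction l as [|a l IH]; simpl; intros Hf; [lra|].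
  assert (0 <= f a) by auto. assert (0 <= fold_right Rplus 0 (map f l)) by auto. lra.
Qed.

Lemma lsum_elem l f j : (forall i, In i l -> 0 <= f i) -> In j l -> f j <= lsum l f.
Proof.
  unfold lsum; induction l as [|a l IH]; simpl; intros Hf Hj; [contradiction|].
  assert (0 <= f a) by auto. assert (0 <= fold_right Rplus 0 (map f l)) by (apply lsum_nonneg; auto).
  destruct Hj as [<- | Hj]; [lra|]. assert (f j <= fold_right Rplus 0 (map f l)) by auto. lra.
Qed.

Lemma lsum_const_le l f c : (forall i, In i l -> f i <= c) -> lsum l f <= INR (length l) * c.
Proof.
  unfold lsum; induction l as [|a l IH]; cbn -[INR]; intros Hf; [simpl; lra|].
  assert (f a <= c) by auto. assert (fold_right Rplus 0 (map f l) <= INR (length l) * c) by auto.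
  rewrite S_INR. lra.
Qed.

Lemma sqrt_sum_sq_le l (a : nat -> R) :
  sqrt (lsum l (fun i => a i ^ 2)) <= lsum l (fun i => Rabs (a i)).
Proof.
  assert (Hsq : lsum l (fun i => a i ^ 2) <= lsum l (fun i => Rabs (a i)) ^ 2).
  { induction l as [|i l IH]; unfold lsum in *; cbn [map fold_right]; [lra|].
    set (T := fold_right Rplus 0 (map (fun i => Rabs (a i)) l)) in *.
    assert (0 <= T) by (apply lsum_nonneg; intros; apply Rabs_pos).
    pose proof (Rabs_pos (a i)). rewrite <- (pow2_abs (a i)). nra. }
  rewrite <- (sqrt_pow2 (lsum l (fun i => Rabs (a i)))) by (apply lsum_nonneg; intros; apply Rabs_pos).
  apply sqrt_le_1_alt. exact Hsq.
Qed.

Lemma coord_le_dist k x y i : (i < k)%nat -> Rabs (x i - y i) <= Defs.dist k x y.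
Proof.
  intros Hi. unfold Defs.dist. rewrite <- (sqrt_pow2 (Rabs (x i - y i))) by apply Rabs_pos.
  apply sqrt_le_1_alt. rewrite pow2_abs.
  apply (lsum_elem (seq 0 k) (fun i => (x i - y i) ^ 2)); [intros; apply pow2_ge_0 | apply in_seq0; auto].
Qed.

Lemma dist_le_box k x y c :
  (forall i, (i < k)%nat -> Rabs (x i - y i) <= c) -> Defs.dist k x y <= INR k * c.
Proof.
  intros Hc. eapply Rle_trans; [apply (sqrt_sum_sq_le (seq 0 k) (fun i => x i - y i))|].
  rewrite <- (length_seq k 0) at 2. apply lsum_const_le. intros i Hi. apply Hc, in_seq0, Hi.
Qed.

(* Proof by
   bisection: a box whose part of [Sx] has no finite subcover has such a
   half-box; the nested boxes shrink to a point of the closure, and an open set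
   containing that point swallows all sufficiently small boxes. *)

Section HeineBorel.
Variables (k : nat) (M : R) (Sx : vec -> Prop) (I : Type) (O : I -> vec -> Prop).
Hypothesis M_nonneg : 0 <= M.
Hypothesis Sx_bounded : forall x, Sx x -> forall i, (i < k)%nat -> -M <= x i <= M.
Hypothesis O_open : forall i, is_open k (O i).
Hypothesis O_covers : forall x, closure k Sx x -> exists i, O i x.

Definition in_box (a b x : vec) : Prop := forall i, (i < k)%nat -> a i <= x i <= b i.

Definition bad_box (a b : vec) : Prop :=
  ~ exists l : list I, forall x, Sx x -> in_box a b x -> exists i, In i l /\ O i x.

Definition upd (f : vec) (j : nat) (v : R) : vec :=
  fun i => if Nat.eq_dec i j then v else f i.

Lemma in_box_upd_hi a b x j v : in_box a b x -> x j <= v -> in_box a (upd b j v) x.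
Proof.
  intros Bx Hv i Hi. specialize (Bx i Hi). unfold upd. destruct (Nat.eq_dec i j) as [->|]; lra.
Qed.

Lemma in_box_upd_lo a b x j v : in_box a b x -> v <= x j -> in_box (upd a j v) b x.
Proof.
  intros Bx Hv i Hi. specialize (Bx i Hi). unfold upd. destruct (Nat.eq_dec i j) as [->|]; lra.
Qed.

Lemma bad_box_cut a b j v : bad_box a b -> bad_box a (upd b j v) \/ bad_box (upd a j v) b.
Proof.
  intros Hab. apply NNPP. intros Hgood. apply not_or_and in Hgood as [H1 H2].
  apply NNPP in H1 as [l1 H1]. apply NNPP in H2 as [l2 H2].
  apply Hab. exists (l1 ++ l2). intros x Sx0 Bx.
  destruct (Rle_dec (x j) v) as [Hv|Hv].
  - destruct (H1 x Sx0 (in_box_upd_hi a b x j v Bx Hv)) as [i [Hi Oi]].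
    exists i. split; [apply in_or_app; auto | exact Oi].
  - destruct (H2 x Sx0 (in_box_upd_lo a b x j v Bx ltac:(lra))) as [i [Hi Oi]].
    exists i. split; [apply in_or_app; auto | exact Oi].
Qed.

Definition half_box (a b a' b' : vec) : Prop :=
  forall i, (i < k)%nat ->
    (a' i = a i /\ b' i = (a i + b i) / 2) \/ (a' i = (a i + b i) / 2 /\ b' i = b i).

Lemma bad_box_halve_upto m a b : bad_box a b ->
  exists a' b', bad_box a' b' /\
    (forall i, (i < m)%nat ->
       (a' i = a i /\ b' i = (a i + b i) / 2) \/ (a' i = (a i + b i) / 2 /\ b' i = b i)) /\
    (forall i, (m <= i)%nat -> a' i = a i /\ b' i = b i).
Proof.
  induction m as [|m IH]; intros Hab.
  - exists a, b. split; [exact Hab | split; [intros; lia | auto]].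
  - destruct (IH Hab) as [a1 [b1 [Hbad [Hlow Hhigh]]]].
    destruct (Hhigh m (le_n m)) as [Ea Eb].
    destruct (bad_box_cut a1 b1 m ((a m + b m) / 2) Hbad) as [Hc|Hc];
      eexists; eexists; (split; [exact Hc | split]);
      intros i Hi; unfold upd; destruct (Nat.eq_dec i m) as [->|Hne];
      solve [lia | rewrite ?Ea, ?Eb; tauto | apply Hlow; lia | apply Hhigh; lia].
Qed.

Lemma bad_box_halve a b : bad_box a b -> exists a' b', bad_box a' b' /\ half_box a b a' b'.
Proof.
  intros Hab. destruct (bad_box_halve_upto k a b Hab) as [a' [b' [Hbad [Hhalf _]]]].
  exists a', b'. split; [exact Hbad | exact Hhalf].
Qed.

Definition halving (ab ab' : vec * vec) : Prop :=
  bad_box (fst ab') (snd ab') /\ half_box (fst ab) (snd ab) (fst ab') (snd ab').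

Definition next_box (ab : vec * vec) : vec * vec := epsilon (inhabits ab) (halving ab).

Lemma next_box_spec ab : bad_box (fst ab) (snd ab) -> halving ab (next_box ab).
Proof.
  intros Hbad. unfold next_box. apply epsilon_spec.
  destruct (bad_box_halve _ _ Hbad) as [a' [b' H]]. exists (a', b'). exact H.
Qed.

Fixpoint boxes (t : nat) : vec * vec :=
  match t with
  | 0%nat => (fun _ => - M, fun _ => M)
  | S t => next_box (boxes t)
  end.

Definition A (t : nat) : vec := fst (boxes t).
Definition B (t : nat) : vec := snd (boxes t).

Lemma width_nonneg t : 0 <= 2 * M / 2 ^ t.
Proof. unfold Rdiv. apply Rmult_le_pos; [lra | left; apply Rinv_0_lt_compat, pow_lt; lra]. Qed.

Section Bisection.
Hypothesis initial_bad : bad_box (A 0) (B 0).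

Lemma boxes_bad t : bad_box (A t) (B t).
Proof. induction t as [|t IH]; [exact initial_bad | exact (proj1 (next_box_spec _ IH))]. Qed.

Lemma boxes_half t : half_box (A t) (B t) (A (S t)) (B (S t)).
Proof. exact (proj2 (next_box_spec _ (boxes_bad t))). Qed.

Lemma boxes_width t i : (i < k)%nat -> B t i - A t i = 2 * M / 2 ^ t.
Proof.
  intros Hi. induction t as [|t IH]; [unfold A, B; simpl; field|].
  assert (Hhalf : B (S t) i - A (S t) i = (B t i - A t i) / 2).
  { destruct (boxes_half t i Hi) as [[E1 E2]|[E1 E2]]; rewrite E1, E2; field. }
  assert (0 < 2 ^ t) by (apply pow_lt; lra).
  rewrite Hhalf, IH. simpl. field. lra.
Qed.

Lemma boxes_step t i : (i < k)%nat -> A t i <= A (S t) i /\ B (S t) i <= B t i.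
Proof.
  intros Hi. pose proof (boxes_width t i Hi).
  pose proof (width_nonneg t).
  destruct (boxes_half t i Hi) as [[E1 E2]|[E1 E2]]; rewrite E1, E2; lra.
Qed.

Lemma boxes_nested t s i : (i < k)%nat -> (t <= s)%nat -> A t i <= A s i /\ B s i <= B t i.
Proof.
  intros Hi Hts. induction Hts as [|s _ IH]; [lra|].
  destruct (boxes_step s i Hi). lra.
Qed.

Lemma boxes_A_le_B s t i : (i < k)%nat -> A s i <= B t i.
Proof.
  intros Hi.
  destruct (boxes_nested s (max s t) i Hi ltac:(lia)), (boxes_nested t (max s t) i Hi ltac:(lia)).
  pose proof (boxes_width (max s t) i Hi).
  pose proof (width_nonneg (max s t)).
  lra.
Qed.

Definition limit_point : vec :=
  fun i => epsilon (inhabits 0) (is_lub (fun r => exists t, r = A t i)).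

Lemma limit_point_in_box t : in_box (A t) (B t) limit_point.
Proof.
  intros i Hi.
  assert (Hlub : is_lub (fun r => exists t, r = A t i) (limit_point i)).
  { unfold limit_point. apply epsilon_spec, upper_bound_thm.
    - exists (B 0%nat i). intros r [s ->]. apply boxes_A_le_B, Hi.
    - exists (A 0%nat i), 0%nat. reflexivity. }
  destruct Hlub as [Hub Hleast]. split.
  - apply Hub. exists t. reflexivity.
  - apply Hleast. intros r [s ->]. apply boxes_A_le_B, Hi.
Qed.

Lemma box_dist_le t x : in_box (A t) (B t) x -> Defs.dist k limit_point x <= INR k * (2 * M / 2 ^ t).
Proof.
  intros Bx. apply dist_le_box. intros i Hi.
  pose proof (boxes_width t i Hi). pose proof (limit_point_in_box t i Hi). specialize (Bx i Hi).
  apply Rabs_le. lra.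
Qed.

Lemma small_box r : 0 < r -> exists t, INR k * (2 * M / 2 ^ t) < r.
Proof.
  intros Hr. destruct (INR_unbounded (INR k * 2 * M / r)) as [t Ht]. exists t.
  pose proof (poly t 1 Rlt_0_1) as Hpow. replace (1 + 1) with 2 in Hpow by ring.
  assert (0 < 2 ^ t) by (apply pow_lt; lra).
  apply (Rmult_lt_reg_r (2 ^ t)); [lra|].
  replace (INR k * (2 * M / 2 ^ t) * 2 ^ t) with (INR k * 2 * M / r * r) by (field; lra).
  pose proof (pos_INR k).
  apply (Rmult_lt_compat_r r) in Ht; [nra | lra].
Qed.

Lemma limit_point_in_closure : closure k Sx limit_point.
Proof.
  intros eps Heps. destruct (small_box eps Heps) as [t Ht].
  assert (Hne : exists x, Sx x /\ in_box (A t) (B t) x).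
  { apply NNPP. intros Hno. apply (boxes_bad t). exists nil.
    intros x Sx0 Bx. exfalso. apply Hno. exists x. split; assumption. }
  destruct Hne as [x [Sx0 Bx]]. exists x. split; [exact Sx0|].
  eapply Rle_lt_trans; [apply box_dist_le, Bx | exact Ht].
Qed.

(* An open set containing the limit point contains a whole box: contradiction. *)
Lemma bisection_absurd : False.
Proof.
  destruct (O_covers _ limit_point_in_closure) as [i0 Oi0].
  destruct (O_open i0 _ Oi0) as [r [Hr Hball]].
  destruct (small_box r Hr) as [t Ht].
  apply (boxes_bad t). exists (i0 :: nil). intros x _ Bx. exists i0. split; [left; reflexivity|].
  apply Hball. eapply Rle_lt_trans; [apply box_dist_le, Bx | exact Ht].
Qed.

End Bisection.

Lemma heine_borel : exists l : list I, forall x, Sx x -> exists i, In i l /\ O i x.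
Proof.
  apply NNPP. intros Hno. apply bisection_absurd. intros [l Hl]. apply Hno.
  exists l. intros x Sx0. apply (Hl x Sx0). intros i Hi. apply (Sx_bounded x Sx0 i Hi).
Qed.

End HeineBorel.

Lemma fold_right_scal {T} (l : list T) (F G : T -> R) c :
  (forall a, In a l -> F a = c * G a) ->
  fold_right Rplus 0 (map F l) = c * fold_right Rplus 0 (map G l).
Proof.
  induction l as [|a l IH]; simpl; intros H; [ring|]. rewrite H, IH by auto. ring.
Qed.

Lemma fold_right_max_le (l : list (list nat)) (F : list nat -> nat) a :
  In a l -> (F a <= fold_right Nat.max 0 (map F l))%nat.
Proof.
  induction l as [|b l IH]; simpl; intros Ha; [contradiction|].
  destruct Ha as [<-|Ha]; [lia | specialize (IH Ha); lia].
Qed.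

Lemma mdeg_mono_le_pdeg {n} (f : mpoly n) a :
  In a (msupp f) -> mcoef f a <> 0 -> (mdeg_mono n a <= pdeg f)%nat.
Proof.
  intros Ha Hc. unfold pdeg.
  pose proof (fold_right_max_le (msupp f)
    (fun a => if Req_EM_T (mcoef f a) 0 then 0%nat else mdeg_mono n a) a Ha) as Hle.
  simpl in Hle. destruct (Req_EM_T (mcoef f a) 0); [contradiction | exact Hle].
Qed.

Lemma mono_eval_neg n a y :
  mono_eval n a (fun i => - y i) = (-1) ^ mdeg_mono n a * mono_eval n a y.
Proof.
  unfold mono_eval, mdeg_mono, prodR, sumN. induction (seq 0 n) as [|i l IH]; simpl; [ring|].
  rewrite IH, pow_add. replace (- y i) with ((-1) * y i) by ring. rewrite Rpow_mult_distr. ring.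
Qed.

Lemma mono_eval_div n a y t :
  mono_eval n a (fun i => y i / t) = mono_eval n a y * (/ t) ^ mdeg_mono n a.
Proof.
  unfold mono_eval, mdeg_mono, prodR, sumN. induction (seq 0 n) as [|i l IH]; simpl; [ring|].
  rewrite IH, pow_add. unfold Rdiv. rewrite Rpow_mult_distr. ring.
Qed.

Lemma hom_eval_neg_horizon {n} (f : mpoly n) xt : xt 0%nat = 0 ->
  hom_eval f (fun i => - xt i) = (-1) ^ pdeg f * hom_eval f xt.
Proof.
  intros H0. unfold hom_eval. apply fold_right_scal. intros a Ha.
  rewrite H0, Ropp_0, mono_eval_neg.
  destruct (Req_EM_T (mcoef f a) 0) as [Hc|Hc]; [rewrite Hc; ring|].
  pose proof (mdeg_mono_le_pdeg f a Ha Hc).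
  destruct (pdeg f - mdeg_mono n a)%nat eqn:E; simpl.
  - replace (mdeg_mono n a) with (pdeg f) by lia. ring.
  - ring.
Qed.

Definition dehom (xt : vec) : vec := fun j => xt (S j) / xt 0%nat.

Lemma hom_eval_dehom {n} (f : mpoly n) xt : 0 < xt 0%nat ->
  hom_eval f xt = xt 0%nat ^ pdeg f * peval f (dehom xt).
Proof.
  intros H0. unfold hom_eval, peval, dehom. apply fold_right_scal. intros a Ha.
  rewrite mono_eval_div.
  destruct (Req_EM_T (mcoef f a) 0) as [Hc|Hc]; [rewrite Hc; ring|].
  pose proof (mdeg_mono_le_pdeg f a Ha Hc).
  replace (pdeg f) with ((pdeg f - mdeg_mono n a) + mdeg_mono n a)%nat at 2 by lia.
  rewrite pow_add.
  assert (Hone : xt 0%nat ^ mdeg_mono n a * (/ xt 0%nat) ^ mdeg_mono n a = 1).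
  { rewrite <- Rpow_mult_distr, Rinv_r by lra. apply pow1. }
  transitivity (mcoef f a * xt 0%nat ^ (pdeg f - mdeg_mono n a) * mono_eval n a (fun i => xt (S i))
                * (xt 0%nat ^ mdeg_mono n a * (/ xt 0%nat) ^ mdeg_mono n a));
    [rewrite Hone | ]; ring.
Qed.

Lemma closure_mono k (S1 S2 : vec -> Prop) x :
  (forall y, S1 y -> S2 y) -> closure k S1 x -> closure k S2 x.
Proof.
  intros Hsub Hx eps Heps. destruct (Hx eps Heps) as [y [Hy Hd]]. exists y. split; auto.
Qed.

Lemma conv_self k (K : vec -> Prop) x : K x -> conv k K x.
Proof.
  intros Kx. exists ((1, x) :: nil). simpl. repeat split.
  - repeat constructor; simpl; [lra | exact Kx].
  - ring.
  - intros i _. ring.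
Qed.

Lemma Rabs_le_between z c : Rabs z <= c -> - c <= z <= c.
Proof. unfold Rabs. destruct (Rcase_abs z); lra. Qed.

Lemma quotient_diff_bound P0 P Q0 Q d Bd :
  0 < P0 -> Rabs P <= Bd -> Rabs (P0 - Q0) <= d -> Rabs (P - Q) <= d -> d <= P0 / 2 ->
  Rabs (P / P0 - Q / Q0) <= d * (2 * (P0 + Bd) / P0 ^ 2).
Proof.
  intros H0 HB H1 H2 H3.
  apply Rabs_le_between in H1.
  assert (HQ : P0 / 2 <= Q0) by lra.
  set (X := P / P0 - Q / Q0).
  assert (EX : X * (P0 * Q0) = P * (Q0 - P0) + (P - Q) * P0) by (unfold X; field; lra).
  assert (Hd : 0 <= d) by (eapply Rle_trans; [apply Rabs_pos | exact H2]).
  assert (E1 : Rabs X * (P0 * Q0) <= d * (Bd + P0)).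
  { replace (Rabs X * (P0 * Q0)) with (Rabs (X * (P0 * Q0)))
      by (rewrite Rabs_mult, (Rabs_pos_eq (P0 * Q0)); [reflexivity | nra]).
    rewrite EX. eapply Rle_trans; [apply Rabs_triang|].
    rewrite !Rabs_mult, (Rabs_pos_eq P0) by lra.
    assert (Rabs (Q0 - P0) <= d) by (apply Rabs_le; lra).
    pose proof (Rabs_pos P). pose proof (Rabs_pos (Q0 - P0)). pose proof (Rabs_pos (P - Q)).
    assert (Rabs P * Rabs (Q0 - P0) <= Bd * d) by (apply Rmult_le_compat; auto).
    assert (Rabs (P - Q) * P0 <= d * P0) by (apply Rmult_le_compat_r; lra).
    lra. }
  pose proof (Rabs_pos X).
  assert (E2 : Rabs X * (P0 ^ 2 / 2) <= d * (Bd + P0)).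
  { eapply Rle_trans; [|exact E1]. apply Rmult_le_compat_l; auto. simpl. nra. }
  assert (0 < P0 ^ 2 / 2) by (simpl; nra).
  apply (Rmult_le_reg_r (P0 ^ 2 / 2)); auto.
  replace (d * (2 * (P0 + Bd) / P0 ^ 2) * (P0 ^ 2 / 2)) with (d * (Bd + P0)) by (field; lra).
  exact E2.
Qed.

(* The l1-sphere chart of [R^n]: [lift x = (1, x) / (1 + |x|_1)] maps [R^n]
   onto the part with [x0 > 0] of the unit l1-sphere of [R^(n+1)], with inverse
   [dehom].  Boundedness of the image and continuity of [dehom] on [x0 > 0]
   transport compactness back to [R^n]. *)

Definition l1norm (k : nat) (x : vec) : R := sumR k (fun i => Rabs (x i)).

Section Lift.
Variable n : nat.

Definition lift_scale (x : vec) : R := 1 + l1norm n x.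

Definition lift (x : vec) : vec :=
  fun i => match i with 0%nat => / lift_scale x | S j => x j / lift_scale x end.

Lemma lift_scale_ge1 x : 1 <= lift_scale x.
Proof.
  unfold lift_scale, l1norm. rewrite sumR_lsum.
  assert (0 <= lsum (seq 0 n) (fun i => Rabs (x i))) by (apply lsum_nonneg; intros; apply Rabs_pos).
  lra.
Qed.

Lemma dehom_lift x : dehom (lift x) = x.
Proof.
  apply functional_extensionality. intros j. unfold dehom. simpl.
  pose proof (lift_scale_ge1 x). field. lra.
Qed.

Lemma l1norm_lift x : l1norm (S n) (lift x) = 1.
Proof.
  pose proof (lift_scale_ge1 x) as Hs.
  unfold l1norm. rewrite sumR_S. simpl.
  rewrite Rabs_pos_eq by (left; apply Rinv_0_lt_compat; lra).
  assert (E : sumR n (fun j => Rabs (x j / lift_scale x)) = / lift_scale x * l1norm n x).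
  { unfold l1norm. rewrite !sumR_lsum, <- lsum_scal. unfold lsum. f_equal. apply map_ext. intros j.
    unfold Rdiv. rewrite Rabs_mult, Rabs_inv, (Rabs_pos_eq (lift_scale x)) by lra. ring. }
  rewrite E. unfold lift_scale in *. field. lra.
Qed.

Lemma lift_bounded x i : (i < S n)%nat -> -1 <= lift x i <= 1.
Proof.
  intros Hi. apply Rabs_le_between. rewrite <- (l1norm_lift x). unfold l1norm. rewrite sumR_lsum.
  apply (lsum_elem _ (fun i => Rabs (lift x i))); [intros; apply Rabs_pos | apply in_seq0, Hi].
Qed.

(* Points of the unit l1-sphere stay away from the origin, and so do limits of them. *)
Lemma closure_lift_not_origin (Sx : vec -> Prop) p :
  closure (S n) (fun xt => exists x, Sx x /\ xt = lift x) p ->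
  ~ (forall i, (i < S n)%nat -> p i = 0).
Proof.
  intros Hp Hzero.
  assert (Hk : 0 < INR (S n)) by (apply lt_0_INR; lia).
  destruct (Hp (/ (2 * INR (S n)))) as [q [[x [_ ->]] Hd]]; [apply Rinv_0_lt_compat; lra|].
  assert (Hle : l1norm (S n) (lift x) <= INR (S n) * / (2 * INR (S n))).
  { unfold l1norm. rewrite sumR_lsum. rewrite <- (length_seq (S n) 0) at 2.
    apply lsum_const_le. intros i Hi. apply in_seq0 in Hi.
    replace (lift x i) with (- (p i - lift x i)) by (rewrite Hzero by exact Hi; ring).
    rewrite Rabs_Ropp. left. eapply Rle_lt_trans; [apply coord_le_dist, Hi | exact Hd]. }
  rewrite l1norm_lift in Hle.
  replace (INR (S n) * / (2 * INR (S n))) with (/ 2) in Hle by (field; lra). lra.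
Qed.

(* [dehom] is Lipschitz near any point with [x0 > 0]. *)
Definition dehom_modulus (p : vec) : R := 2 * (p 0%nat + l1norm (S n) p) / p 0%nat ^ 2.

Lemma dehom_dist_le p q : 0 < p 0%nat -> Defs.dist (S n) p q <= p 0%nat / 2 ->
  Defs.dist n (dehom p) (dehom q) <= INR n * (Defs.dist (S n) p q * dehom_modulus p).
Proof.
  intros Hp0 Hd. apply dist_le_box. intros j Hj. unfold dehom, dehom_modulus.
  apply quotient_diff_bound; auto; try (apply coord_le_dist; lia).
  unfold l1norm. rewrite sumR_lsum.
  apply (lsum_elem _ (fun i => Rabs (p i))); [intros; apply Rabs_pos | apply in_seq0; lia].
Qed.

Lemma dehom_pullback_open (O : vec -> Prop) :
  is_open n O -> is_open (S n) (fun xt => 0 < xt 0%nat /\ O (dehom xt)).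
Proof.
  intros Hop p [Hp0 HOp]. destruct (Hop _ HOp) as [eps [Heps Hball]].
  assert (HC : 0 <= dehom_modulus p).
  { unfold dehom_modulus, l1norm. rewrite sumR_lsum.
    assert (0 <= lsum (seq 0 (S n)) (fun i => Rabs (p i))) by (apply lsum_nonneg; intros; apply Rabs_pos).
    unfold Rdiv. apply Rmult_le_pos; [lra | left; apply Rinv_0_lt_compat, pow_lt, Hp0]. }
  set (K := INR n * dehom_modulus p + 1).
  assert (HK : 0 < K) by (unfold K; pose proof (pos_INR n); nra).
  exists (Rmin (p 0%nat / 2) (eps / K)). split; [apply Rmin_pos; [lra | apply Rdiv_lt_0_compat; auto]|].
  intros q Hq. set (d := Defs.dist (S n) p q) in *.
  assert (Hd1 : d < p 0%nat / 2) by (eapply Rlt_le_trans; [exact Hq | apply Rmin_l]).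
  assert (Hd2 : d < eps / K) by (eapply Rlt_le_trans; [exact Hq | apply Rmin_r]).
  assert (Hd0 : 0 <= d) by (unfold d, Defs.dist; apply sqrt_pos).
  split.
  - pose proof (Rabs_le_between _ _ (coord_le_dist (S n) p q 0 (Nat.lt_0_succ n))) as Hq0.
    fold d in Hq0. lra.
  - apply Hball. eapply Rle_lt_trans; [apply dehom_dist_le; [exact Hp0 | fold d; lra]|]. fold d.
    apply (Rmult_lt_compat_r K) in Hd2; [|exact HK].
    replace (eps / K * K) with eps in Hd2 by (field; lra). unfold K in *. nra.
Qed.

End Lift.

Section Constraints.
Variables (n m1 m2 : nat) (h g : nat -> mpoly n).

Lemma Uc_neg_horizon xt :
  (forall j, (j < m2)%nat -> Nat.Even (pdeg (g j))) ->
  Uc n m1 m2 h g xt -> xt 0%nat = 0 -> Uc n m1 m2 h g (fun i => - xt i).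
Proof.
  intros Heven [Hh [Hg _]] H0. split; [|split].
  - intros i Hi. rewrite hom_eval_neg_horizon, Hh by auto. ring.
  - intros j Hj. rewrite hom_eval_neg_horizon by auto.
    destruct (Heven j Hj) as [d ->]. rewrite pow_1_even, Rmult_1_l. auto.
  - lra.
Qed.

Lemma Uc_dehom xt : Uc n m1 m2 h g xt -> 0 < xt 0%nat -> Uset n m1 m2 h g (dehom xt).
Proof.
  intros [Hh [Hg _]] H0.
  assert (Hpow : forall d, 0 < xt 0%nat ^ d) by (intros; apply pow_lt; exact H0).
  split.
  - intros i Hi. specialize (Hh i Hi). rewrite hom_eval_dehom in Hh by exact H0.
    apply Rmult_integral in Hh as [E|E]; [specialize (Hpow (pdeg (h i))); lra | exact E].
  - intros j Hj. specialize (Hg j Hj). rewrite hom_eval_dehom in Hg by exact H0.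
    specialize (Hpow (pdeg (g j))). apply (Rmult_le_reg_l (xt 0%nat ^ pdeg (g j))); lra.
Qed.


Lemma lift_Uo x : Uset n m1 m2 h g x -> Uo n m1 m2 h g (lift n x).
Proof.
  intros [Hh Hg].
  assert (H0 : 0 < lift n x 0%nat) by (apply Rinv_0_lt_compat; pose proof (lift_scale_ge1 n x); lra).
  split; [|split; [|exact H0]].
  - intros i Hi. rewrite hom_eval_dehom, dehom_lift, Hh by auto. ring.
  - intros j Hj. rewrite hom_eval_dehom, dehom_lift by auto.
    apply Rmult_le_pos; [apply pow_le; lra | auto].
Qed.

(* If the closure of [~U^o] lies in [~U^c] and meets the hyperplane at infinity
   only at the origin, then [U] is compact: the closure of [lift U] then lies in
   [x0 > 0], where [dehom] pulls an open cover of [U] back to one of it. *)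
Lemma compact_of_trivial_horizon :
  (forall xt, closure (S n) (Uo n m1 m2 h g) xt -> Uc n m1 m2 h g xt) ->
  (forall xt, closure (S n) (Uo n m1 m2 h g) xt -> xt 0%nat = 0 ->
     forall i, (i < S n)%nat -> xt i = 0) ->
  is_compact n (Uset n m1 m2 h g).
Proof.
  intros Hsub Hhorizon I O Hopen Hcover.
  set (T := fun xt => exists x, Uset n m1 m2 h g x /\ xt = lift n x).
  destruct (heine_borel (S n) 1 T I (fun i xt => 0 < xt 0%nat /\ O i (dehom xt))) as [l Hl].
  - lra.
  - intros xt [x [_ ->]] i Hi. apply lift_bounded, Hi.
  - intros i. apply dehom_pullback_open, Hopen.
  - intros p Hp.
    assert (HpU : closure (S n) (Uo n m1 m2 h g) p).
    { apply (closure_mono _ T); [intros xt [x [Ux ->]]; apply lift_Uo, Ux | exact Hp]. }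
    assert (Hp0 : 0 < p 0%nat).
    { destruct (Hsub p HpU) as [_ [_ [Hlt|Heq]]]; [exact Hlt|].
      exfalso. exact (closure_lift_not_origin n _ p Hp (Hhorizon p HpU (eq_sym Heq))). }
    destruct (Hcover _ (Uc_dehom p (Hsub p HpU) Hp0)) as [i Oi]. exists i. split; assumption.
  - exists l. intros x Ux.
    destruct (Hl (lift n x)) as [i [Hi [_ Oi]]]; [exists x; split; auto|].
    exists i. split; [exact Hi|]. rewrite dehom_lift in Oi. exact Oi.
Qed.

End Constraints.

Theorem mainTheorem14 (n m1 m2 : nat) (h g : nat -> mpoly n) :
  (forall j, (j < m2)%nat -> Nat.Even (pdeg (g j))) ->
  ~ is_compact n (Uset n m1 m2 h g) ->
  is_closed (S n) (conv (S n) (closure (S n) (Uo n m1 m2 h g))) ->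
  pointed (S n) (conv (S n) (closure (S n) (Uo n m1 m2 h g))) ->
  ~ closed_at_inf n m1 m2 h g.
Proof.
  intros Heven Hnoncompact _ Hpointed Hclosed_inf.
  apply Hnoncompact, compact_of_trivial_horizon.
  - intros xt Hxt. apply Hclosed_inf, Hxt.
  - intros xt Hxt H0. apply Hpointed; apply conv_self; [exact Hxt|].
    apply Hclosed_inf, Uc_neg_horizon; [exact Heven | apply Hclosed_inf, Hxt | exact H0].
Qed.
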